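(* Let $n \geq 2$ and let $P_n=u_0u_1\dots u_n$ be the path with $n$ edges. For every walk $W$ of $P_n$, there exists a walk of $P_n$ equivalent to $W$ which follows a walk $S$ of the form $S=u_iu_{i-1}\dots u_mu_{m+1}\dots u_Mu_{M-1}\dots u_{j}$ for some indices $m \leq i\le j \leq M$.
   Context: A walk of a graph $G$ is a sequence of vertices $v_0\dots v_l$ with $v_tv_{t+1}\in E(G)$ for all $t$ (vertices and edges may repeat). A walk $W'$ follows the walk $W=v_0\dots v_l$ if there are non-negative integers $i_0,\dots,i_{l-1}$ such that $W'=v_0(v_1v_0)^{i_0}v_1\dots v_{l-1}(v_lv_{l-1})^{i_{l-1}}v_l$, i.e. $W'$ is obtained by traversing $W$ from start to end and inserting, along each edge $v_tv_{t+1}$, some number $i_t$ of half-turns $v_{t+1}v_tv_{t+1}$. Two walks are equivalent if their multisets of traversed edges are equal. *)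

(* The path P_n = u_0 u_1 ... u_n has vertex u_t encoded as
   the natural number t (0 <= t <= n); u_t u_s is an edge iff |t - s| = 1. *)
From mathcomp Require Import all_boot.
Set Implicit Arguments. Unset Strict Implicit. Unset Printing Implicit Defensive.

Definition path_adj (x y : nat) : bool := (y == x.+1) || (x == y.+1).

Definition is_walk (n : nat) (W : seq nat) : Prop :=
  match W with
  | [::] => False
  | x :: s => path path_adj x s /\ all (fun v => v <= n) W
  end.

Definition uedge (x y : nat) : nat * nat := (minn x y, maxn x y).

Definition walk_edges (W : seq nat) : seq (nat * nat) :=
  match W with
  | [::] => [::]
  | x :: s => pairmap uedge x s
  end.

Definition walk_equiv (W1 W2 : seq nat) : Prop :=
  perm_eq (walk_edges W1) (walk_edges W2).

(* exp_tail x s k: starting at x, traverse s, inserting k_t half-turns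
   (y x y repeated) along the t-th edge x y *)
Fixpoint exp_tail (x : nat) (s : seq nat) (k : seq nat) : seq nat :=
  match s, k with
  | y :: s', i :: k' => y :: flatten (nseq i [:: x; y]) ++ exp_tail y s' k'
  | _, _ => [::]
  end.

(* W' follows W = v_0 ... v_l :  W' = v_0 (v_1 v_0)^{i_0} v_1 ... v_{l-1} (v_l v_{l-1})^{i_{l-1}} v_l
   (note v_0 (v_1 v_0)^i v_1 = v_0 v_1 (v_0 v_1)^i) *)
Definition follows (W' W : seq nat) : Prop :=
  match W with
  | [::] => False
  | x :: s => exists k : seq nat, size k = size s /\ W' = x :: exp_tail x s k
  end.

(* S = u_i u_{i-1} ... u_m u_{m+1} ... u_M u_{M-1} ... u_j *)
Definition zigzag (m i j M : nat) : seq nat :=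
  rev (iota m (i - m).+1) ++ iota m.+1 (M - m) ++ rev (iota j (M - j)).

Example zigzag_test : zigzag 1 3 2 5 = [:: 3; 2; 1; 2; 3; 4; 5; 4; 3; 2].
Proof. by []. Qed.
Example follows_test : follows [:: 1; 2; 1; 2; 3] [:: 1; 2; 3].
Proof. by exists [:: 1; 0]. Qed.

From mathcomp Require Import all_boot zify.
Set Implicit Arguments. Unset Strict Implicit. Unset Printing Implicit Defensive.

(* Every edge of P_n has the form u_t u_(t+1), so up to equivalence a walk is
   the function c counting the traversals of each edge.  For a walk from u_x
   to u_y, c is positive exactly on an interval [m, M) (the walk is
   connected) and odd exactly on [min x y, max x y) (parity of crossings).
   Conversely, given such a c with i = min x y and j = max x y, the zigzag
   u_i ... u_m ... u_M ... u_j crosses edge t once, or twice when t < i or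
   t >= j, with the same parity as c t; the missing traversals are supplied
   by (c t - 1 - [t < i] - [j <= t]) / 2 half-turns on its ascending part. *)

Definition edge_count (W : seq nat) (t : nat) : nat :=
  count_mem (t, t.+1) (walk_edges W).

Lemma uedgeC x y : uedge x y = uedge y x.
Proof. by rewrite /uedge minnC maxnC. Qed.

Lemma uedge_adj x y : path_adj x y -> uedge x y = (minn x y, (minn x y).+1).
Proof. by rewrite /path_adj /uedge => adj; congr pair; lia. Qed.

Lemma edge_count_cons x y s t :
  edge_count [:: x, y & s] t = (uedge x y == (t, t.+1)) + edge_count (y :: s) t.
Proof. by []. Qed.

Lemma edge_count_cat x A B t :
  edge_count (x :: A ++ B) t = edge_count (x :: A) t + edge_count (last x A :: B) t.
Proof. by rewrite /edge_count /walk_edges pairmap_cat count_cat. Qed.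

Lemma walk_edges_adj x s : path path_adj x s ->
  all (fun e : nat * nat => e.2 == e.1.+1) (walk_edges (x :: s)).
Proof.
elim: s x => [//|y s IHs] x /andP[xy ys].
by rewrite [walk_edges _]/= (uedge_adj xy) /= eqxx; apply: IHs.
Qed.

Lemma walk_equiv_edge_count n W1 W2 : is_walk n W1 -> is_walk n W2 ->
  edge_count W1 =1 edge_count W2 -> walk_equiv W1 W2.
Proof.
case: W1 => [//|x1 s1] [/walk_edges_adj/allP form1 _].
case: W2 => [//|x2 s2] [/walk_edges_adj/allP form2 _] counts.
apply/allP => -[a b]; rewrite mem_cat => /orP[/form1 | /form2] /eqP /= ->.
all: by apply/eqP; apply: counts.
Qed.

Lemma edge_count_profile x s : path path_adj x s ->
  exists m M, [/\ m <= minn x (last x s), maxn x (last x s) <= M,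
    forall t, (0 < edge_count (x :: s) t) = (m <= t < M),
    forall t, odd (edge_count (x :: s) t) = (minn x (last x s) <= t < maxn x (last x s))
    & M \in x :: s].
Proof.
elim: s x => [|y s IHs] x /=.
  by move=> _; exists x, x; rewrite mem_head /edge_count; split => [||t|t|] //=; lia.
move=> /andP[xy /IHs[m [M [m_le M_ge supp par M_in]]]].
exists (minn m x), (maxn M x).
have step t : edge_count [:: x, y & s] t = (t == minn x y) + edge_count (y :: s) t.
  by rewrite edge_count_cons (uedge_adj xy) xpair_eqE eqSS andbb eq_sym.
move: xy; rewrite /path_adj => xy.
split => [||t|t|]; rewrite ?step.
- lia.
- lia.
- by move: (supp t); lia.
- by rewrite oddD par; lia.
- by case: leqP => _; rewrite ?mem_head // in_cons M_in orbT.
Qed.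

Lemma half_turns_edges (x y i : nat) (s : seq nat) :
  pairmap uedge y (flatten (nseq i [:: x; y]) ++ s) =
  nseq i.*2 (uedge x y) ++ pairmap uedge y s.
Proof. by elim: i => [//|i /= ->]; rewrite uedgeC. Qed.

Lemma half_turns_last (T : Type) (x y : T) (i : nat) (s : seq T) :
  last y (flatten (nseq i [:: x; y]) ++ s) = last y s.
Proof. by elim: i. Qed.

Lemma half_turns_path (x y i : nat) (s : seq nat) : path_adj x y ->
  path path_adj y (flatten (nseq i [:: x; y]) ++ s) = path path_adj y s.
Proof.
move=> xy; have yx : path_adj y x by rewrite /path_adj orbC.
by elim: i => [//|i /= ->]; rewrite xy yx.
Qed.

Lemma walk_edges_exp_tail x y s i k :
  walk_edges (x :: exp_tail x (y :: s) (i :: k)) =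
  nseq i.*2.+1 (uedge x y) ++ walk_edges (y :: exp_tail y s k).
Proof. by rewrite /= half_turns_edges. Qed.

Lemma last_exp_tail x s k : size k = size s -> last x (exp_tail x s k) = last x s.
Proof. by elim: s x k => [|y s IHs] x [|i k] //= [/IHs]; rewrite half_turns_last. Qed.

Lemma exp_tail_cat x s1 s2 k1 k2 : size k1 = size s1 ->
  exp_tail x (s1 ++ s2) (k1 ++ k2) = exp_tail x s1 k1 ++ exp_tail (last x s1) s2 k2.
Proof. by elim: s1 x k1 => [|y s IHs] x [|i k] //= [/IHs ->]; rewrite catA. Qed.

Lemma exp_tail_nseq0 x s : exp_tail x s (nseq (size s) 0) = s.
Proof. by elim: s x => [//|y s IHs] x /=; rewrite IHs. Qed.

Lemma path_exp_tail x s k : path path_adj x s -> path path_adj x (exp_tail x s k).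
Proof.
elim: s x k => [|y s IHs] x [|i k] //= /andP[xy ys].
by rewrite xy half_turns_path // IHs.
Qed.

Lemma all_exp_tail (P : pred nat) x s k : all P (x :: s) -> all P (exp_tail x s k).
Proof.
elim: s x k => [|y s IHs] x [|i k] //= /and3P[Px Py Ps].
rewrite Py all_cat IHs /= ?Py ?Ps // andbT.
by elim: i => [//|i /= ->]; rewrite Px Py.
Qed.

Lemma is_walk_follows n W' S : is_walk n S -> follows W' S -> is_walk n W'.
Proof.
case: S => [//|x s] [xs all_xs] [k [_ ->]]; split; first exact: path_exp_tail.
by rewrite /= (allP all_xs x (mem_head _ _)) all_exp_tail.
Qed.

Lemma rev_iota_cons m d : rev (iota m d.+1) = (m + d) :: rev (iota m d).
Proof. by rewrite -addn1 iotaD rev_cat. Qed.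

Lemma path_rev_iota m d : path path_adj (m + d) (rev (iota m d)).
Proof.
elim: d => [//|d IHd]; rewrite rev_iota_cons addnS /= IHd andbT /path_adj; lia.
Qed.

Lemma last_rev_iota m d : last (m + d) (rev (iota m d)) = m.
Proof. by elim: d => [|d IHd]; rewrite ?addn0 // rev_iota_cons. Qed.

Lemma path_iota m d : path path_adj m (iota m.+1 d).
Proof. elim: d m => [//|d IHd] m /=; rewrite IHd andbT /path_adj; lia. Qed.

Lemma last_iota m d : last m (iota m.+1 d) = m + d.
Proof. by elim: d m => [|d IHd] m /=; rewrite ?addn0 // IHd addSnnS. Qed.

Lemma edge_count_rev_iota m d t : edge_count (rev (iota m d.+1)) t = (m <= t < m + d).
Proof.
elim: d => [|d IHd]; first by rewrite /edge_count /=; lia.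
rewrite rev_iota_cons rev_iota_cons edge_count_cons -rev_iota_cons IHd.
rewrite /uedge xpair_eqE; lia.
Qed.

Lemma edge_count_exp_tail_iota m d (f : nat -> nat) t :
  edge_count (m :: exp_tail m (iota m.+1 d) (map f (iota m d))) t =
  if m <= t < m + d then (f t).*2.+1 else 0.
Proof.
elim: d m => [|d IHd] m; first by rewrite /edge_count /=; case: ifP; lia.
rewrite /edge_count [iota m.+1 _]/= [iota m _]/= [map _ _]/= walk_edges_exp_tail.
rewrite count_cat -/(edge_count _ t) IHd count_nseq.
have -> : uedge m m.+1 = (m, m.+1) by rewrite /uedge; congr pair; lia.
rewrite /= xpair_eqE eqSS andbb.
by case: eqP => [<-|ne]; case: ifP; case: ifP; lia.
Qed.

Definition zigzag_half_turns (c : nat -> nat) (i j t : nat) : nat :=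
  (c t - (1 + (t < i) + (j <= t)))./2.

Lemma zigzag_realizes_edge_count m i j M (c : nat -> nat) :
  m <= i -> i <= j -> j <= M ->
  (forall t, (0 < c t) = (m <= t < M)) ->
  (forall t, odd (c t) = (i <= t < j)) ->
  exists2 W', follows W' (zigzag m i j M) & edge_count W' =1 c.
Proof.
move=> m_le_i i_le_j j_le_M supp par; rewrite /zigzag.
set down := rev (iota m (i - m)); set up := iota m.+1 (M - m).
set back := rev (iota j (M - j)).
set k_up := map (zigzag_half_turns c i j) (iota m (M - m)).
have down_cons : i :: down = rev (iota m (i - m).+1) by rewrite rev_iota_cons subnKC.
have back_cons : M :: back = rev (iota j (M - j).+1) by rewrite rev_iota_cons subnKC.
have last_down : last i down = m by rewrite -(subnKC m_le_i) last_rev_iota.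
have last_up : last m up = M by rewrite last_iota; lia.
have size_k_up : size k_up = size up by rewrite !size_map !size_iota.
rewrite -down_cons.
exists (i :: down ++ exp_tail m up k_up ++ back).
  exists (nseq (size down) 0 ++ k_up ++ nseq (size back) 0); split.
    by rewrite !size_cat !size_nseq size_k_up.
  rewrite !exp_tail_cat ?size_nseq //.
  by rewrite last_down last_up !exp_tail_nseq0.
move=> t; rewrite edge_count_cat last_down edge_count_cat (last_exp_tail _ size_k_up).
rewrite last_up down_cons back_cons edge_count_rev_iota edge_count_exp_tail_iota.
rewrite edge_count_rev_iota /zigzag_half_turns.
by move: (supp t) (par t); case: ifP; lia.
Qed.

Lemma is_walk_zigzag n m i j M :
  m <= i -> i <= j -> j <= M -> M <= n -> is_walk n (zigzag m i j M).
Proof.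
move=> m_le_i i_le_j j_le_M M_le_n.
rewrite /zigzag -{1}(subnKC m_le_i) rev_iota_cons; split.
  rewrite !cat_path path_rev_iota last_rev_iota path_iota last_iota subnKC; last by lia.
  by rewrite -{1}(subnKC j_le_M) path_rev_iota.
apply/allP => v; rewrite -rev_iota_cons !mem_cat !mem_rev !mem_iota; lia.
Qed.

Theorem lemma5p3 (n : nat) (hn : 2 <= n) (W : seq nat) :
  is_walk n W ->
  exists W' : seq nat,
    is_walk n W' /\ walk_equiv W' W /\
    exists m i j M : nat,
      [/\ m <= i, i <= j, j <= M & M <= n] /\
      is_walk n (zigzag m i j M) /\ follows W' (zigzag m i j M).
Proof.
case: W => [//|x s] walk_W; have [walk_s all_W] := walk_W.
have [m [M [m_le M_ge supp par M_in]]] := edge_count_profile walk_s.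
set i := minn x (last x s) in m_le par; set j := maxn x (last x s) in M_ge par.
have i_le_j : i <= j by lia.
have M_le_n : M <= n := allP all_W M M_in.
have walk_zz := is_walk_zigzag m_le i_le_j M_ge M_le_n.
have [W' follows_zz counts] := zigzag_realizes_edge_count m_le i_le_j M_ge supp par.
have walk_W' := is_walk_follows walk_zz follows_zz.
exists W'; split => //; split; first exact: walk_equiv_edge_count walk_W' walk_W counts.
by exists m, i, j, M.
Qed.
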